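(* Let $0\le\epsilon<1$ and let $\omega=(\omega_n)_{n\ge0}$ be a Markov chain on $\{-1,+1\}$ with transition matrix $Q=\begin{pmatrix}\epsilon&1-\epsilon\\1-\epsilon&\epsilon\end{pmatrix}$ started from its invariant distribution $\frac12(\delta_{-1}+\delta_{+1})$ (so $f(x)=x$). Set $p(\epsilon)=\sum_{t\ge1}K(t)\frac{1+(2\epsilon-1)^t}{2}$. Then the annealed critical point of the pinning model with disorder $\omega$ is $$h_c^a(\beta)=-\log\left(p(\epsilon)\cosh\beta+\sqrt{p(\epsilon)^2\cosh^2\beta-2p(\epsilon)+1}\right),\qquad \beta\ge0.$$
   Context: $K(n)$, $n\ge1$, is a probability distribution on $\{1,2,\dots\}$ with $K(n)>0$ for all $n$ (the interarrival law of a recurrent renewal process $\tau$ with $\tau_0=0$, $\delta_n=\mathbf 1_{\{n\in\tau\}}$). The partition function is $Z_{N,\beta,h,\omega}=E\big[\exp\big(\sum_{n=1}^N(\beta\omega_n+h)\delta_n\big)\delta_N\big]$, and the annealed critical point is $h_c^a(\beta)=\sup\{h: \lim_N\frac1N\log\mathbb{E}Z_{N,\beta,h,\omega}=0\}$, $\mathbb{E}$ denoting average over $\omega$. *)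

From Stdlib Require Import Reals Lra List.
Import ListNotations.
Open Scope R_scope.

(* All boolean lists of length n (true encodes +1 / a renewal point). *)
Fixpoint blists (n : nat) : list (list bool) :=
  match n with
  | O => [nil]
  | S m => map (cons true) (blists m) ++ map (cons false) (blists m)
  end.

Definition sumR {A : Type} (f : A -> R) (l : list A) : R :=
  fold_right (fun x acc => f x + acc) 0 l.

Definition spin (b : bool) : R := if b then 1 else -1.

Definition Qtrans (eps : R) (a b : bool) : R :=
  if Bool.eqb a b then eps else 1 - eps.

Fixpoint trans_prod (eps : R) (prev : bool) (rest : list bool) : R :=
  match rest with
  | nil => 1
  | b :: rest' => Qtrans eps prev b * trans_prod eps b rest'
  end.

(* Law of (omega_0, ..., omega_N), chain started from (delta_{-1}+delta_{+1})/2. *)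
Definition mc_prob (eps : R) (w : list bool) : R :=
  match w with
  | nil => 0
  | w0 :: rest => / 2 * trans_prod eps w0 rest
  end.

Fixpoint Kcum (K : nat -> R) (g : nat) : R :=
  match g with
  | O => 0
  | S g' => K (S g') + Kcum K g'
  end.

(* P( tau /\ {1..N} = {n : d_n = true} ) for d = (d_1,...,d_N), tau_0 = 0:
   product of K over the gaps, times the tail probability of the last gap.
   [gap] = number of steps since the last renewal. *)
Fixpoint ren_prob (K : nat -> R) (gap : nat) (d : list bool) : R :=
  match d with
  | nil => 1 - Kcum K gap
  | true :: d' => K (S gap) * ren_prob K 0 d'
  | false :: d' => ren_prob K (S gap) d'
  end.

(* sum_{n=1}^N (beta omega_n + h) delta_n, with ws = (omega_1..omega_N), d = (delta_1..delta_N) *)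
Fixpoint energy (beta h : R) (ws d : list bool) : R :=
  match ws, d with
  | w :: ws', b :: d' => (if b then beta * spin w + h else 0) + energy beta h ws' d'
  | _, _ => 0
  end.

Definition indic (b : bool) : R := if b then 1 else 0.

(* Quenched partition function Z_{N,beta,h,omega}, omega = (omega_0,...,omega_N) *)
Definition Zq (K : nat -> R) (beta h : R) (N : nat) (w : list bool) : R :=
  sumR (fun d => ren_prob K 0 d * exp (energy beta h (tl w) d) * indic (last d false))
       (blists N).

Definition EZ (K : nat -> R) (eps beta h : R) (N : nat) : R :=
  sumR (fun w => mc_prob eps w * Zq K beta h N w) (blists (S N)).

Definition zero_free_energy_set (K : nat -> R) (eps beta : R) : R -> Prop :=
  fun h => Un_cv (fun n => ln (EZ K eps beta h (S n)) / INR (S n)) 0.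

From Stdlib Require Import Reals Lra Lia List Arith.
Open Scope R_scope.

(* Summing out the renewal configuration and the disorder, the annealed partition
   function started at a renewal with the chain in state a, Z_a(n), solves the vector
   renewal equation Z(n) = sum_t K(t) Q^t D Z(n - t), with D = diag(e^(h+beta), e^(h-beta)).
   The full kernel sum_t K(t) Q^t D equals e^h [[p, 1-p], [1-p, p]] diag(e^beta, e^-beta),
   whose Perron root is e^h mu, mu = p cosh beta + sqrt(p^2 cosh^2 beta - 2p + 1), with a
   positive Perron vector y.  If e^h mu <= 1, a multiple of y is a supersolution and Z stays
   bounded; if a truncation of the kernel, tilted by e^(-rt), still maps y above y, then
   e^(-rn) Z(n) is bounded below and the free energy is at least r.  For e^h mu > 1 this
   gives some r > 0; for e^h mu = 1 it gives every r < 0.  Hence h_c^a = -ln mu. *)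

Lemma sumR_app {A} (f : A -> R) l1 l2 : sumR f (l1 ++ l2) = sumR f l1 + sumR f l2.
Proof. induction l1 as [|x l1 IH]; simpl; [ring | rewrite IH; ring]. Qed.

Lemma sumR_map {A B} (f : B -> R) (g : A -> B) l :
  sumR f (map g l) = sumR (fun x => f (g x)) l.
Proof. induction l as [|x l IH]; simpl; [ring | rewrite IH; ring]. Qed.

Lemma sumR_ext {A} (f g : A -> R) l : (forall x, f x = g x) -> sumR f l = sumR g l.
Proof. intro Hfg; induction l as [|x l IH]; simpl; [ring | rewrite IH, Hfg; ring]. Qed.

Lemma sumR_mult_l {A} (f : A -> R) c l : sumR (fun x => c * f x) l = c * sumR f l.
Proof. induction l as [|x l IH]; simpl; [ring | rewrite IH; ring]. Qed.

Lemma sumR_plus {A} (f g : A -> R) l : sumR (fun x => f x + g x) l = sumR f l + sumR g l.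
Proof. induction l as [|x l IH]; simpl; [ring | rewrite IH; ring]. Qed.

Lemma last_cons (d : list bool) : forall c def, last (c :: d) def = last d c.
Proof.
  induction d as [|x d IH]; intros c def; [reflexivity|].
  change (last (x :: d) def = last (x :: d) c). rewrite !IH. reflexivity.
Qed.

Section Renewal_equation.

Variables (K : nat -> R) (eps beta h : R).

Definition weight (c : bool) : R := exp (beta * spin c + h).

(* Contribution of [n] further steps, the chain being in state [a] and the last
   renewal [g] steps ago; [pinned] stands for [delta] at the current time, which is
   the endpoint indicator when [n = 0]. *)
Definition Zfrom (a : bool) (g : nat) (pinned : bool) (n : nat) : R :=
  sumR (fun ws => sumR (fun d =>
      trans_prod eps a ws * ren_prob K g d * exp (energy beta h ws d) * indic (last d pinned))
    (blists n)) (blists n).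

Lemma Zfrom_0 a g pinned : Zfrom a g pinned 0 = (1 - Kcum K g) * indic pinned.
Proof. unfold Zfrom; simpl. rewrite exp_0. ring. Qed.

Lemma Zfrom_S a g pinned n :
  Zfrom a g pinned (S n) =
    Qtrans eps a true * (K (S g) * weight true * Zfrom true 0 true n + Zfrom true (S g) false n)
  + Qtrans eps a false * (K (S g) * weight false * Zfrom false 0 true n + Zfrom false (S g) false n).
Proof.
  assert (Hstep : forall b ws,
    sumR (fun d => trans_prod eps a (b :: ws) * ren_prob K g d * exp (energy beta h (b :: ws) d)
                   * indic (last d pinned)) (blists (S n))
    = Qtrans eps a b *
        (K (S g) * weight b * sumR (fun d => trans_prod eps b ws * ren_prob K 0 d
                                 * exp (energy beta h ws d) * indic (last d true)) (blists n)
         + sumR (fun d => trans_prod eps b ws * ren_prob K (S g) d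
                    * exp (energy beta h ws d) * indic (last d false)) (blists n))).
  { intros b ws. cbn [blists]. rewrite sumR_app, !sumR_map.
    rewrite Rmult_plus_distr_l, <- Rmult_assoc, <- !sumR_mult_l.
    f_equal; apply sumR_ext; intro d; unfold weight; cbn [trans_prod ren_prob energy];
      rewrite last_cons, exp_plus; try rewrite exp_0; ring. }
  unfold Zfrom at 1. cbn [blists]. rewrite sumR_app, !sumR_map.
  rewrite (sumR_ext _ _ _ (Hstep true)), (sumR_ext _ _ _ (Hstep false)).
  rewrite !sumR_mult_l, !sumR_plus, !sumR_mult_l. unfold Zfrom. ring.
Qed.

Lemma EZ_Zfrom N :
  EZ K eps beta h N = / 2 * Zfrom true 0 false N + / 2 * Zfrom false 0 false N.
Proof.
  unfold EZ, Zq, Zfrom. cbn [blists]. rewrite sumR_app, !sumR_map, <- !sumR_mult_l.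
  f_equal; apply sumR_ext; intro ws; cbn [mc_prob tl];
    rewrite Rmult_assoc, <- sumR_mult_l; f_equal; apply sumR_ext; intro d; ring.
Qed.

Definition sgn (a c : bool) : R := if Bool.eqb a c then 1 else -1.

(* Closed form of the t-step transition probabilities Q^t(a, c). *)
Definition Qpow (t : nat) (a c : bool) : R := (1 + (2 * eps - 1) ^ t * sgn a c) / 2.

Lemma Qpow_1 a c : Qpow 1 a c = Qtrans eps a c.
Proof. unfold Qtrans, Qpow, sgn; destruct a, c; simpl; field. Qed.

Lemma Qpow_S t a c :
  Qtrans eps a true * Qpow t true c + Qtrans eps a false * Qpow t false c = Qpow (S t) a c.
Proof. unfold Qtrans, Qpow, sgn; destruct a, c; simpl; field. Qed.

Lemma Qpow_sum t a : Qpow t a true + Qpow t a false = 1.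
Proof. unfold Qpow, sgn; destruct a; simpl; field. Qed.

Definition transfer (t : nat) (a : bool) (v : bool -> R) : R :=
  Qpow t a true * weight true * v true + Qpow t a false * weight false * v false.

Lemma transfer_S t a v :
  Qtrans eps a true * transfer t true v + Qtrans eps a false * transfer t false v
  = transfer (S t) a v.
Proof. unfold transfer. rewrite <- !Qpow_S. ring. Qed.

Lemma transfer_scal t a v k : transfer t a (fun c => k * v c) = k * transfer t a v.
Proof. unfold transfer; ring. Qed.

Definition Zpin (a : bool) (n : nat) : R := Zfrom a 0 true n.

Lemma Zpin_0 a : Zpin a 0 = 1.
Proof. unfold Zpin; rewrite Zfrom_0; simpl; ring. Qed.

Lemma Zfrom_unpinned n : forall a g,
  Zfrom a g false (S n) =
  sum_f_R0 (fun i => K (g + S i)%nat * transfer (S i) a (fun c => Zpin c (n - i))) n.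
Proof.
  induction n as [|n IH]; intros a g.
  - rewrite Zfrom_S. unfold Zpin, transfer. simpl. rewrite <- !Qpow_1, !Zfrom_0.
    replace (g + 1)%nat with (S g) by lia. simpl. ring.
  - assert (Hrest :
      sum_f_R0 (fun i => K (g + S (S i))%nat
                         * transfer (S (S i)) a (fun c => Zpin c (S n - S i))) n
      = Qtrans eps a true * sum_f_R0 (fun i => K (S g + S i)%nat
                                      * transfer (S i) true (fun c => Zpin c (n - i))) n
      + Qtrans eps a false * sum_f_R0 (fun i => K (S g + S i)%nat
                                      * transfer (S i) false (fun c => Zpin c (n - i))) n).
    { rewrite !scal_sum, <- plus_sum. apply sum_eq; intros i _.
      rewrite <- transfer_S. replace (g + S (S i))%nat with (S g + S i)%nat by lia.
      simpl (S n - S i)%nat. ring. }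
    assert (Hfirst : K (g + 1)%nat * transfer 1 a (fun c => Zpin c (S n - 0))
      = Qtrans eps a true * K (S g) * weight true * Zpin true (S n)
      + Qtrans eps a false * K (S g) * weight false * Zpin false (S n)).
    { unfold transfer. rewrite !Qpow_1. replace (g + 1)%nat with (S g) by lia.
      replace (S n - 0)%nat with (S n) by lia. ring. }
    rewrite Zfrom_S, !IH, (decomp_sum _ (S n)) by lia. simpl pred. rewrite Hfirst, Hrest.
    unfold Zpin. ring.
Qed.

Lemma Zpin_S a n :
  Zpin a (S n) = sum_f_R0 (fun i => K (S i) * transfer (S i) a (fun c => Zpin c (n - i))) n.
Proof.
  transitivity (Zfrom a 0 false (S n)); [unfold Zpin; rewrite !Zfrom_S; reflexivity|].
  apply Zfrom_unpinned.
Qed.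

Lemma EZ_Zpin n : EZ K eps beta h (S n) = / 2 * Zpin true (S n) + / 2 * Zpin false (S n).
Proof. rewrite EZ_Zfrom. unfold Zpin. rewrite !(Zfrom_S true), !(Zfrom_S false). reflexivity. Qed.

End Renewal_equation.

Lemma pow_between_m1_1 (x : R) (t : nat) : -1 <= x <= 1 -> -1 <= x ^ t <= 1.
Proof. intro Hx; induction t as [|t IH]; simpl; [lra | nra]. Qed.

Lemma sum_f_R0_pos (f : nat -> R) (n : nat) : (forall i, 0 < f i) -> 0 < sum_f_R0 f n.
Proof. intro Hf; induction n as [|n IH]; simpl; [apply Hf | specialize (Hf (S n)); lra]. Qed.

Lemma sum_f_R0_le_N (f : nat -> R) (m n : nat) :
  (forall i, 0 <= f i) -> (m <= n)%nat -> sum_f_R0 f m <= sum_f_R0 f n.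
Proof. intros Hf Hmn; induction Hmn as [|n _ IH]; simpl; [lra | specialize (Hf (S n)); lra]. Qed.

Lemma finite_lower_bound (f : nat -> bool -> R) (y : bool -> R) (T : nat) :
  (forall m a, 0 < f m a) -> (forall a, 0 < y a) ->
  exists c, 0 < c /\ forall m a, (m <= T)%nat -> c * y a <= f m a.
Proof.
  intros Hf Hy.
  assert (Hratio : forall m a, 0 < f m a / y a /\ f m a / y a * y a = f m a).
  { intros m a. specialize (Hf m a); specialize (Hy a).
    split; [apply Rdiv_lt_0_compat; lra | field; lra]. }
  induction T as [|T [c [Hc HT]]].
  - exists (Rmin (f 0%nat true / y true) (f 0%nat false / y false)). split.
    { apply Rmin_glb_lt; apply Hratio. }
    intros m a Hm. replace m with 0%nat by lia. destruct (Hratio 0%nat a) as [_ Heq].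
    rewrite <- Heq. apply Rmult_le_compat_r; [left; apply Hy|].
    destruct a; [apply Rmin_l | apply Rmin_r].
  - set (r := Rmin (f (S T) true / y true) (f (S T) false / y false)).
    exists (Rmin c r). split.
    { apply Rmin_glb_lt; [exact Hc | apply Rmin_glb_lt; apply Hratio]. }
    intros m a Hm. destruct (Nat.eq_dec m (S T)) as [->|Hne].
    + destruct (Hratio (S T) a) as [_ Heq]. rewrite <- Heq.
      apply Rmult_le_compat_r; [left; apply Hy|]. eapply Rle_trans; [apply Rmin_r|].
      destruct a; [apply Rmin_l | apply Rmin_r].
    + eapply Rle_trans; [|apply HT; lia].
      apply Rmult_le_compat_r; [left; apply Hy | apply Rmin_l].
Qed.

Lemma ln_le_compat (x y : R) : 0 < x -> x <= y -> ln x <= ln y.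
Proof. intros Hx [Hlt | ->]; [left; apply ln_increasing; assumption | right; reflexivity]. Qed.

Lemma exp_le_compat (x y : R) : x <= y -> exp x <= exp y.
Proof. intros [Hlt | ->]; [left; apply exp_increasing; assumption | right; reflexivity]. Qed.

Lemma pow_exp (x : R) (n : nat) : exp x ^ n = exp (INR n * x).
Proof.
  induction n as [|n IH]; [simpl; rewrite Rmult_0_l, exp_0; reflexivity|].
  rewrite S_INR, <- tech_pow_Rmult, IH, <- exp_plus. f_equal; ring.
Qed.

Section Comparison.

Variables (K : nat -> R) (eps beta h : R).
Hypothesis HK : forall n, (1 <= n)%nat -> 0 < K n.
Hypothesis Heps : 0 <= eps <= 1.

Lemma Qpow_nonneg t a c : 0 <= Qpow eps t a c.
Proof.
  assert (Hr : -1 <= (2 * eps - 1) ^ t <= 1) by (apply pow_between_m1_1; lra).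
  unfold Qpow, sgn; destruct (Bool.eqb a c); lra.
Qed.

Lemma transfer_mono t a v w :
  (forall c, v c <= w c) -> transfer eps beta h t a v <= transfer eps beta h t a w.
Proof.
  intro Hvw. unfold transfer.
  assert (Hw : forall c, 0 < weight beta h c) by (intro; apply exp_pos).
  pose proof (Qpow_nonneg t a true); pose proof (Qpow_nonneg t a false).
  pose proof (Hw true); pose proof (Hw false); pose proof (Hvw true); pose proof (Hvw false).
  apply Rplus_le_compat; apply Rmult_le_compat_l; try apply Rmult_le_pos; lra.
Qed.

Lemma transfer_pos t a v : (forall c, 0 < v c) -> 0 < transfer eps beta h t a v.
Proof.
  intro Hv.
  set (m := Rmin (weight beta h true * v true) (weight beta h false * v false)).
  assert (Hm : 0 < m).
  { apply Rmin_glb_lt; apply Rmult_lt_0_compat; auto; apply exp_pos. }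
  assert (Hle : Qpow eps t a true * m + Qpow eps t a false * m <= transfer eps beta h t a v).
  { unfold transfer. rewrite !Rmult_assoc.
    apply Rplus_le_compat; apply Rmult_le_compat_l; try apply Qpow_nonneg;
      [apply Rmin_l | apply Rmin_r]. }
  pose proof (Qpow_sum eps t a). nra.
Qed.

Lemma Zpin_pos n a : 0 < Zpin K eps beta h a n.
Proof.
  revert a; induction n as [n IH] using lt_wf_ind; intro a.
  destruct n as [|n]; [rewrite Zpin_0; lra|].
  rewrite Zpin_S. apply sum_f_R0_pos; intro i.
  apply Rmult_lt_0_compat; [apply HK; lia|].
  apply transfer_pos; intro c; apply IH; lia.
Qed.

Lemma Zpin_le_supersolution (v : bool -> R) (Hv : forall c, 1 <= v c)
  (Hsup : forall a n, sum_f_R0 (fun i => K (S i) * transfer eps beta h (S i) a v) n <= v a) :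
  forall n a, Zpin K eps beta h a n <= v a.
Proof.
  intro n; induction n as [n IH] using lt_wf_ind; intro a.
  destruct n as [|n]; [rewrite Zpin_0; apply Hv|].
  rewrite Zpin_S. eapply Rle_trans; [|apply (Hsup a n)].
  apply sum_Rle; intros i Hi. apply Rmult_le_compat_l; [left; apply HK; lia|].
  apply transfer_mono; intro c; apply IH; lia.
Qed.

Lemma Zpin_ge_subsolution (nu : R) (Hnu : 0 < nu) (y : bool -> R) (Hy : forall c, 0 < y c)
  (T : nat)
  (Hsub : forall a,
     y a <= sum_f_R0 (fun i => nu ^ S i * (K (S i) * transfer eps beta h (S i) a y)) T) :
  exists c, 0 < c /\ forall m a, c * y a <= nu ^ m * Zpin K eps beta h a m.
Proof.
  destruct (finite_lower_bound (fun m a => nu ^ m * Zpin K eps beta h a m) y T)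
    as [c [Hc Hbase]]; auto.
  { intros m a. apply Rmult_lt_0_compat; [apply pow_lt; exact Hnu | apply Zpin_pos]. }
  exists c; split; [exact Hc|].
  intro m; induction m as [m IH] using lt_wf_ind; intro a.
  destruct (le_lt_dec m T) as [HmT|HTm]; [apply Hbase; exact HmT|].
  destruct m as [|m]; [lia|].
  set (g := fun i => nu ^ S i * (K (S i) * transfer eps beta h (S i) a y)).
  assert (Hg : forall i, 0 <= g i).
  { intro i. apply Rmult_le_pos; [left; apply pow_lt; exact Hnu|].
    apply Rmult_le_pos; [left; apply HK; lia|]. left; apply transfer_pos; exact Hy. }
  apply Rle_trans with (c * sum_f_R0 g m).
  { apply Rmult_le_compat_l; [lra|]. eapply Rle_trans; [apply (Hsub a)|].
    apply sum_f_R0_le_N; [exact Hg | lia]. }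
  rewrite Zpin_S, !scal_sum. apply sum_Rle; intros i Hi. unfold g.
  replace (nu ^ S m) with (nu ^ S i * nu ^ (m - i)) by (rewrite <- pow_add; f_equal; lia).
  apply Rle_trans with (nu ^ S i * (K (S i) * transfer eps beta h (S i) a (fun c' => c * y c'))).
  { right. rewrite transfer_scal. ring. }
  apply Rle_trans with (nu ^ S i * (K (S i) * transfer eps beta h (S i) a
                          (fun c' => nu ^ (m - i) * Zpin K eps beta h c' (m - i)))).
  2: { right. rewrite transfer_scal. ring. }
  apply Rmult_le_compat_l; [left; apply pow_lt; exact Hnu|].
  apply Rmult_le_compat_l; [left; apply HK; lia|].
  apply transfer_mono; intro c'; apply IH; lia.
Qed.

Lemma EZ_pos n : 0 < EZ K eps beta h (S n).
Proof.
  rewrite EZ_Zpin. pose proof (Zpin_pos (S n) true); pose proof (Zpin_pos (S n) false). lra.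
Qed.

Lemma ln_EZ_bounded (v : bool -> R) (Hv : forall c, 1 <= v c)
  (Hsup : forall a n, sum_f_R0 (fun i => K (S i) * transfer eps beta h (S i) a v) n <= v a) :
  exists B, forall n, ln (EZ K eps beta h (S n)) <= B.
Proof.
  exists (ln (/ 2 * v true + / 2 * v false)); intro n.
  apply ln_le_compat; [apply EZ_pos|]. rewrite EZ_Zpin.
  pose proof (Zpin_le_supersolution v Hv Hsup (S n) true).
  pose proof (Zpin_le_supersolution v Hv Hsup (S n) false). lra.
Qed.

Lemma ln_EZ_ge_linear (x : R) (y : bool -> R) (Hy : forall c, 0 < y c) (T : nat)
  (Hsub : forall a,
     y a <= sum_f_R0 (fun i => exp x ^ S i * (K (S i) * transfer eps beta h (S i) a y)) T) :
  exists A, forall n, A - INR (S n) * x <= ln (EZ K eps beta h (S n)).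
Proof.
  destruct (Zpin_ge_subsolution (exp x) (exp_pos x) y Hy T Hsub) as [c [Hc Hlow]].
  pose proof (Hy true) as Hyt.
  exists (ln (/ 2 * c * y true)); intro n.
  replace (ln (/ 2 * c * y true) - INR (S n) * x)
    with (ln (/ 2 * c * y true * exp (- (INR (S n) * x)))).
  2: { rewrite ln_mult, ln_exp; [ring | | apply exp_pos].
       apply Rmult_lt_0_compat; [apply Rmult_lt_0_compat|]; lra. }
  apply ln_le_compat.
  { apply Rmult_lt_0_compat; [apply Rmult_lt_0_compat; [apply Rmult_lt_0_compat|]|]; try lra.
    apply exp_pos. }
  rewrite EZ_Zpin. pose proof (Zpin_pos (S n) false).
  assert (Hpin : c * y true * exp (- (INR (S n) * x)) <= Zpin K eps beta h true (S n)).
  { specialize (Hlow (S n) true). rewrite pow_exp in Hlow.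
    rewrite exp_Ropp. apply (Rmult_le_reg_l (exp (INR (S n) * x))); [apply exp_pos|].
    replace (exp (INR (S n) * x) * (c * y true * / exp (INR (S n) * x))) with (c * y true)
      by (field; apply exp_neq_0).
    exact Hlow. }
  lra.
Qed.

End Comparison.

Lemma not_Un_cv_0_linear_growth (u : nat -> R) (A d : R) : 0 < d ->
  (forall n, A + INR (S n) * d <= u n) -> ~ Un_cv (fun n => u n / INR (S n)) 0.
Proof.
  intros Hd Hu Hcv.
  destruct (Hcv (d / 2)) as [N HN]; [lra|].
  destruct (INR_archimed (d / 2) (Rabs A) ltac:(lra)) as [M HM].
  set (n := max N M).
  assert (Hs : INR M <= INR (S n)) by (apply le_INR; unfold n; lia).
  assert (Hs0 : 0 < INR (S n)) by (apply lt_0_INR; lia).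
  specialize (HN n ltac:(unfold n; lia)). specialize (Hu n).
  unfold Rdist in HN. rewrite Rminus_0_r in HN. apply Rabs_def2 in HN.
  set (q := u n / INR (S n)) in HN.
  assert (Hq : u n = q * INR (S n)) by (unfold q; field; lra).
  pose proof (Rle_abs (- A)) as HA. rewrite Rabs_Ropp in HA.
  assert (INR M * (d / 2) <= INR (S n) * (d / 2)) by (apply Rmult_le_compat_r; lra).
  nra.
Qed.

Lemma Un_cv_0_sublinear (u : nat -> R) (B : R) :
  (forall n, u n <= B) -> (forall x, 0 < x -> exists A, forall n, A - INR (S n) * x <= u n) ->
  Un_cv (fun n => u n / INR (S n)) 0.
Proof.
  intros HB Hlow e He.
  destruct (Hlow (e / 2)) as [A HA]; [lra|].
  destruct (INR_archimed (e / 2) (Rabs B + Rabs A) ltac:(lra)) as [N HN].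
  exists N; intros n Hn.
  assert (Hs : INR N <= INR (S n)) by (apply le_INR; lia).
  assert (Hs0 : 0 < INR (S n)) by (apply lt_0_INR; lia).
  specialize (HA n); specialize (HB n).
  unfold Rdist. rewrite Rminus_0_r. set (q := u n / INR (S n)).
  assert (Hq : u n = q * INR (S n)) by (unfold q; field; lra).
  pose proof (Rle_abs B); pose proof (Rle_abs (- A)) as HA'. rewrite Rabs_Ropp in HA'.
  pose proof (Rabs_pos A); pose proof (Rabs_pos B).
  assert (INR N * (e / 2) <= INR (S n) * (e / 2)) by (apply Rmult_le_compat_r; lra).
  apply Rabs_def1; nra.
Qed.

Lemma infinite_sum_ext (f g : nat -> R) (l : R) :
  (forall i, f i = g i) -> infinite_sum f l -> infinite_sum g l.
Proof.
  intros Hfg Hf. apply (Un_cv_ext (sum_f_R0 f)); [|exact Hf].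
  intro n; apply sum_eq; intros; apply Hfg.
Qed.

Lemma infinite_sum_lincomb (f g : nat -> R) (lf lg a b : R) :
  infinite_sum f lf -> infinite_sum g lg ->
  infinite_sum (fun i => a * f i + b * g i) (a * lf + b * lg).
Proof.
  intros Hf Hg.
  assert (Hcst : forall c : R, Un_cv (fun _ => c) c).
  { intros c e He; exists 0%nat; intros. unfold Rdist. rewrite Rminus_diag, Rabs_R0. lra. }
  apply (Un_cv_ext (fun n => a * sum_f_R0 f n + b * sum_f_R0 g n)).
  { intro n; induction n as [|n IH]; simpl; [ring | rewrite <- IH; ring]. }
  apply CV_plus; apply CV_mult; auto.
Qed.

Lemma infinite_sum_eventually_gt (f : nat -> R) (l th : R) :
  infinite_sum f l -> th < l -> exists N, forall n, (N <= n)%nat -> th < sum_f_R0 f n.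
Proof.
  intros Hf Hth. destruct (Hf (l - th)) as [N HN]; [lra|].
  exists N; intros n Hn. specialize (HN n Hn). unfold Rdist in HN.
  apply Rabs_def2 in HN. lra.
Qed.

Lemma sum_f_R0_weighted_ge (f w : nat -> R) (th l : R) (T : nat) : 0 < th ->
  (forall i, 0 <= f i) -> (forall i, (i <= T)%nat -> / th <= w i) ->
  th * l < sum_f_R0 f T -> l <= sum_f_R0 (fun i => w i * f i) T.
Proof.
  intros Hth Hf Hw Hl.
  apply Rle_trans with (sum_f_R0 (fun i => f i * / th) T).
  { rewrite <- scal_sum. apply (Rmult_le_reg_l th); [exact Hth|].
    rewrite <- Rmult_assoc, Rinv_r, Rmult_1_l; lra. }
  apply sum_Rle; intros i Hi. rewrite Rmult_comm.
  apply Rmult_le_compat_r; [apply Hf | apply Hw; exact Hi].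
Qed.

(* sum_t K(t) Q^t(a, c), the transition matrix averaged over one renewal gap. *)
Definition Pavg (p : R) (a c : bool) : R := if Bool.eqb a c then p else 1 - p.

Definition mu (p beta : R) : R := p * cosh beta + sqrt (p ^ 2 * cosh beta ^ 2 - 2 * p + 1).

(* Eigenvector of [[p, 1 - p], [1 - p, p]] * diag(e^beta, e^-beta) for its Perron root [mu]. *)
Definition perron_vector (p beta : R) (c : bool) : R :=
  if c then (1 - p) * exp (- beta) else mu p beta - p * exp beta.

Lemma exp_mul_exp_opp (x : R) : exp x * exp (- x) = 1.
Proof. rewrite exp_Ropp. field. apply exp_neq_0. Qed.

Section Perron.

Variables (p beta : R).
Hypothesis Hp : 0 < p < 1.

Lemma cosh_exp : cosh beta = (exp beta + exp (- beta)) / 2.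
Proof. reflexivity. Qed.

Lemma mu_discriminant_nonneg : 0 <= p ^ 2 * cosh beta ^ 2 - 2 * p + 1.
Proof.
  rewrite cosh_exp. pose proof (exp_mul_exp_opp beta).
  set (E := exp beta) in *; set (F := exp (- beta)) in *.
  replace (p ^ 2 * ((E + F) / 2) ^ 2 - 2 * p + 1)
    with ((p * ((E - F) / 2)) ^ 2 + p * p * (E * F) - 2 * p + 1) by field.
  pose proof (pow2_ge_0 (p * ((E - F) / 2))). nra.
Qed.

Lemma mu_quadratic :
  mu p beta ^ 2 - p * (exp beta + exp (- beta)) * mu p beta + 2 * p - 1 = 0.
Proof.
  pose proof (sqrt_sqrt _ mu_discriminant_nonneg) as Hs.
  unfold mu. set (s := sqrt _) in *. rewrite cosh_exp in *.
  transitivity (s * s - (p ^ 2 * ((exp beta + exp (- beta)) / 2) ^ 2 - 2 * p + 1));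
    [field | rewrite Hs; ring].
Qed.

Lemma mu_pos : 0 < mu p beta.
Proof.
  assert (Hcosh : 0 < cosh beta).
  { rewrite cosh_exp. pose proof (exp_pos beta); pose proof (exp_pos (- beta)). lra. }
  pose proof (sqrt_pos (p ^ 2 * cosh beta ^ 2 - 2 * p + 1)). unfold mu. nra.
Qed.

Lemma perron_vector_pos c : 0 < perron_vector p beta c.
Proof.
  destruct c; simpl.
  - apply Rmult_lt_0_compat; [lra | apply exp_pos].
  - pose proof (sqrt_sqrt _ mu_discriminant_nonneg) as Hs.
    pose proof (sqrt_pos (p ^ 2 * cosh beta ^ 2 - 2 * p + 1)) as Hs0.
    pose proof (exp_mul_exp_opp beta) as HEF.
    unfold mu. set (s := sqrt _) in *. rewrite cosh_exp in *.
    set (E := exp beta) in *; set (F := exp (- beta)) in *.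
    assert (Hgap : s * s = (p * (E - F) / 2) ^ 2 + (1 - p) ^ 2).
    { rewrite Hs. transitivity ((p * (E - F) / 2) ^ 2 + p ^ 2 * (E * F) - 2 * p + 1);
        [field | rewrite HEF; ring]. }
    assert (Hmu : p * ((E + F) / 2) + s - p * E = s - p * (E - F) / 2) by field.
    rewrite Hmu. nra.
Qed.

Lemma weight_true h : weight beta h true = exp h * exp beta.
Proof. unfold weight, spin. rewrite Rmult_1_r, exp_plus; ring. Qed.

Lemma weight_false h : weight beta h false = exp h * exp (- beta).
Proof.
  unfold weight, spin. replace (beta * -1 + h) with (- beta + h) by ring.
  rewrite exp_plus; ring.
Qed.

Lemma perron_eigen h a :
  weight beta h true * perron_vector p beta true * Pavg p a true
  + weight beta h false * perron_vector p beta false * Pavg p a false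
  = exp h * mu p beta * perron_vector p beta a.
Proof.
  pose proof mu_quadratic as Hq. pose proof (exp_mul_exp_opp beta) as HEF.
  rewrite weight_true, weight_false. unfold perron_vector, Pavg.
  set (E := exp beta) in *; set (F := exp (- beta)) in *; set (m := mu p beta) in *.
  destruct a; simpl.
  - transitivity (exp h * ((1 - p) * F * m + p * (1 - p) * (E * F - E * F))); ring.
  - transitivity (exp h * ((1 - p) * (1 - p) * (E * F) + p * F * m - p * p * (E * F)));
      [ring|].
    rewrite HEF. transitivity (exp h * (m * m - p * E * m)); [|ring].
    f_equal. nra.
Qed.

End Perron.

Section Annealed_critical_point.

Variables (K : nat -> R) (eps beta p : R).
Hypothesis HK : forall n, (1 <= n)%nat -> 0 < K n.
Hypothesis HKsum : infinite_sum (fun n => K (S n)) 1.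
Hypothesis Heps : 0 <= eps < 1.
Hypothesis Hp : infinite_sum (fun n => K (S n) * ((1 + (2 * eps - 1) ^ (S n)) / 2)) p.

Let Heps1 : 0 <= eps <= 1.
Proof. lra. Qed.

Lemma p_bounds : 0 < p < 1.
Proof.
  assert (Hr : forall t, -1 <= (2 * eps - 1) ^ t <= 1) by (intro; apply pow_between_m1_1; lra).
  split.
  - apply Rlt_le_trans with (sum_f_R0 (fun n => K (S n) * ((1 + (2 * eps - 1) ^ (S n)) / 2)) 1).
    + simpl. pose proof (HK 1 ltac:(lia)); pose proof (HK 2 ltac:(lia)).
      pose proof (pow2_ge_0 (2 * eps - 1)). nra.
    + apply sum_incr; [exact Hp|]. intro n.
      apply Rmult_le_pos; [left; apply HK; lia|]. specialize (Hr (S n)). lra.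
  - assert (Hq : infinite_sum (fun n => K (S n) * ((1 - (2 * eps - 1) ^ (S n)) / 2)) (1 - p)).
    { replace (1 - p) with (-1 * p + 1 * 1) by ring.
      eapply infinite_sum_ext; [|exact (infinite_sum_lincomb _ _ _ _ (-1) 1 Hp HKsum)].
      intro n; cbv beta; field. }
    enough (Hsum : 0 < sum_f_R0 (fun n => K (S n) * ((1 - (2 * eps - 1) ^ (S n)) / 2)) 0
                     <= 1 - p) by lra.
    split.
    + simpl. pose proof (HK 1 ltac:(lia)). nra.
    + apply sum_incr; [exact Hq|]. intro n.
      apply Rmult_le_pos; [left; apply HK; lia|]. specialize (Hr (S n)). lra.
Qed.

Lemma transfer_series h (v : bool -> R) a :
  infinite_sum (fun i => K (S i) * transfer eps beta h (S i) a v)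
    (weight beta h true * v true * Pavg p a true + weight beta h false * v false * Pavg p a false).
Proof.
  set (wt := weight beta h true * v true); set (wf := weight beta h false * v false).
  destruct a; unfold Pavg; simpl.
  - replace (wt * p + wf * (1 - p)) with ((wt - wf) * p + wf * 1) by ring.
    eapply infinite_sum_ext; [|apply (infinite_sum_lincomb _ _ _ _ _ _ Hp HKsum)].
    intro i; unfold transfer, Qpow, sgn; simpl; unfold wt, wf; field.
  - replace (wt * (1 - p) + wf * p) with ((wf - wt) * p + wt * 1) by ring.
    eapply infinite_sum_ext; [|apply (infinite_sum_lincomb _ _ _ _ _ _ Hp HKsum)].
    intro i; unfold transfer, Qpow, sgn; simpl; unfold wt, wf; field.
Qed.

Lemma transfer_series_perron h a :
  infinite_sum (fun i => K (S i) * transfer eps beta h (S i) a (perron_vector p beta))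
    (exp h * mu p beta * perron_vector p beta a).
Proof. rewrite <- perron_eigen by exact p_bounds. apply transfer_series. Qed.

Lemma transfer_perron_nonneg h a i :
  0 <= K (S i) * transfer eps beta h (S i) a (perron_vector p beta).
Proof.
  apply Rmult_le_pos; [left; apply HK; lia|].
  left; apply transfer_pos; [exact Heps1|]. apply perron_vector_pos, p_bounds.
Qed.

Lemma partial_sums_exceed h th : th < exp h * mu p beta ->
  exists T, forall a, th * perron_vector p beta a
    < sum_f_R0 (fun i => K (S i) * transfer eps beta h (S i) a (perron_vector p beta)) T.
Proof.
  intro Hth.
  assert (Hgt : forall a, th * perron_vector p beta a < exp h * mu p beta * perron_vector p beta a).
  { intro a. apply Rmult_lt_compat_r; [apply perron_vector_pos, p_bounds | exact Hth]. }
  destruct (infinite_sum_eventually_gt _ _ _ (transfer_series_perron h true) (Hgt true))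
    as [N1 HN1].
  destruct (infinite_sum_eventually_gt _ _ _ (transfer_series_perron h false) (Hgt false))
    as [N2 HN2].
  exists (max N1 N2); intros []; [apply HN1 | apply HN2]; lia.
Qed.

Lemma ln_EZ_bounded_subcritical h : exp h * mu p beta <= 1 ->
  exists B, forall n, ln (EZ K eps beta h (S n)) <= B.
Proof.
  intro Hsub. set (y := perron_vector p beta).
  assert (Hy : forall c, 0 < y c) by (intro; apply perron_vector_pos, p_bounds).
  set (C := / y true + / y false).
  assert (HC : forall c, 1 <= C * y c).
  { intro c. rewrite <- (Rinv_l (y c)) by (apply Rgt_not_eq, Hy).
    pose proof (Rinv_0_lt_compat _ (Hy true)); pose proof (Rinv_0_lt_compat _ (Hy false)).
    apply Rmult_le_compat_r; [left; apply Hy|]. unfold C; destruct c; lra. }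
  apply (ln_EZ_bounded K eps beta h HK Heps1 (fun c => C * y c) HC).
  intros a n.
  apply Rle_trans with (C * sum_f_R0 (fun i => K (S i) * transfer eps beta h (S i) a y) n).
  { right. rewrite scal_sum. apply sum_eq; intros i _. rewrite transfer_scal. ring. }
  assert (HC0 : 0 <= C) by (pose proof (HC true); pose proof (Hy true); nra).
  apply Rmult_le_compat_l; [exact HC0|].
  apply Rle_trans with (exp h * mu p beta * y a).
  { apply sum_incr; [apply transfer_series_perron | intro; apply transfer_perron_nonneg]. }
  pose proof (Hy a). nra.
Qed.

Lemma not_zero_free_energy_supercritical h : 1 < exp h * mu p beta ->
  ~ zero_free_energy_set K eps beta h.
Proof.
  intro Hsup. set (th := (1 + exp h * mu p beta) / 2).
  destruct (partial_sums_exceed h th ltac:(unfold th; lra)) as [T HT].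
  assert (Hlnth : 0 < ln th) by (rewrite <- ln_1; apply ln_increasing; unfold th; lra).
  assert (HT0 : 0 < INR (S T)) by (apply lt_0_INR; lia).
  set (d := ln th / INR (S T)).
  assert (Hd : 0 < d) by (apply Rdiv_lt_0_compat; assumption).
  assert (Hweights : forall i, (i <= T)%nat -> / th <= exp (- d) ^ S i).
  { intros i Hi.
    replace (/ th) with (exp (INR (S T) * - d)).
    2: { unfold d. replace (INR (S T) * - (ln th / INR (S T))) with (- ln th) by (field; lra).
         rewrite exp_Ropp, exp_ln; [reflexivity | unfold th; lra]. }
    rewrite pow_exp. apply exp_le_compat.
    assert (INR (S i) <= INR (S T)) by (apply le_INR; lia). nra. }
  destruct (ln_EZ_ge_linear K eps beta h HK Heps1 (- d) (perron_vector p beta)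
              (perron_vector_pos p beta p_bounds) T) as [A HA].
  { intro a. apply (sum_f_R0_weighted_ge _ _ th); [unfold th; lra | | exact Hweights | apply HT].
    intro; apply transfer_perron_nonneg. }
  apply (not_Un_cv_0_linear_growth (fun n => ln (EZ K eps beta h (S n))) A d Hd).
  intro n. specialize (HA n). lra.
Qed.

Lemma zero_free_energy_critical h : exp h * mu p beta = 1 -> zero_free_energy_set K eps beta h.
Proof.
  intro Hcrit.
  destruct (ln_EZ_bounded_subcritical h ltac:(lra)) as [B HB].
  apply (Un_cv_0_sublinear (fun n => ln (EZ K eps beta h (S n))) B HB).
  intros x Hx.
  destruct (partial_sums_exceed h (exp (- x))) as [T HT].
  { rewrite Hcrit, <- exp_0. apply exp_increasing. lra. }
  apply (ln_EZ_ge_linear K eps beta h HK Heps1 x (perron_vector p beta)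
           (perron_vector_pos p beta p_bounds) T).
  intro a. apply (sum_f_R0_weighted_ge _ _ (exp (- x))); [apply exp_pos | | | apply HT].
  - intro; apply transfer_perron_nonneg.
  - intros i _. rewrite exp_Ropp, Rinv_inv, pow_exp.
    apply exp_le_compat. rewrite S_INR. pose proof (pos_INR i). nra.
Qed.

End Annealed_critical_point.

Theorem mainTheorem3 (K : nat -> R)
  (HKpos : forall n : nat, (1 <= n)%nat -> 0 < K n)
  (HKsum : infinite_sum (fun n => K (S n)) 1)
  (eps beta p : R) (Heps : 0 <= eps < 1) (Hbeta : 0 <= beta)
  (Hp : infinite_sum (fun n => K (S n) * ((1 + (2 * eps - 1) ^ (S n)) / 2)) p) :
  is_lub (zero_free_energy_set K eps beta)
    (- ln (p * cosh beta + sqrt (p ^ 2 * (cosh beta) ^ 2 - 2 * p + 1))).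
Proof.
  change (is_lub (zero_free_energy_set K eps beta) (- ln (mu p beta))).
  pose proof (mu_pos p beta (p_bounds K eps p HKpos HKsum Heps Hp)) as Hmu.
  assert (Hcrit : exp (- ln (mu p beta)) * mu p beta = 1).
  { rewrite exp_Ropp, exp_ln by exact Hmu. field. lra. }
  split.
  - intros h Hh. apply Rnot_lt_le; intro Hlt.
    apply (not_zero_free_energy_supercritical K eps beta p HKpos HKsum Heps Hp h); [|exact Hh].
    rewrite <- Hcrit. apply Rmult_lt_compat_r; [exact Hmu | apply exp_increasing, Hlt].
  - intros b Hb. apply Hb.
    exact (zero_free_energy_critical K eps beta p HKpos HKsum Heps Hp _ Hcrit).
Qed.
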